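(* Let $X$, $Y$ be FK-spaces containing $\phi$ and let $Z=X+Y$ with its inductive-limit FK-topology. Then $E(X)+E(Y)\subseteq E(Z)$ for each of $E=D_p^qS,\ D_p^qW,\ D_p^qF,\ D_p^qB$.
   Context: An FK-space is a vector subspace of the space $w$ of all complex sequences with a complete metrizable locally convex topology in which coordinate functionals are continuous; $X'$ is its continuous dual. If $X$, $Y$ have paranorms $\rho$, $s$, then $Z=X+Y$ is an FK-space with paranorm $\tau(z)=\inf\{\rho(x)+s(y): x\in X, y\in Y, x+y=z\}$. $\delta^j$ has $1$ in position $j$, $0$ elsewhere; $\phi=\operatorname{span}\{\delta^j\}$. $p(n)<q(n)$ are nonnegative integer sequences with $q(n)\to\infty$. For $x\in w$, $x^{(k)}=\sum_{j=1}^kx_j\delta^j$ and $T_n(x)=\frac{1}{q(n)-p(n)}\sum_{k=p(n)+1}^{q(n)}x^{(k)}$. For an FK-space $X\supseteq\phi$: $D_p^qS(X)=\{x\in X: T_n(x)\to x\text{ in }X\}$; $D_p^qW(X)=\{x\in X: f(T_n(x))\to f(x)\ \forall f\in X'\}$; $D_p^qF(X)=\{x\in X:\lim_n f(T_n(x))\text{ exists }\forall f\in X'\}$; $D_p^qB(X)=\{x\in X:\sup_n|f(T_n(x))|<\infty\ \forall f\in X'\}$. *)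

From mathcomp Require Import all_boot all_algebra.
From mathcomp Require Import complex.
From mathcomp Require Import boolp classical_sets reals.
Import GRing.Theory Num.Theory.

Set Implicit Arguments.
Unset Strict Implicit.
Unset Printing Implicit Defensive.

Local Open Scope ring_scope.
Local Open Scope classical_set_scope.
Local Open Scope complex_scope.

Section FK.
Variable R : realType.

(* the space w of all complex sequences; coordinate j (paper, 1-based) is
   index j-1 here *)
Definition wseq := nat -> R[i].

Definition cabs (z : R[i]) : R := Num.sqrt (complex.Re z ^+ 2 + complex.Im z ^+ 2).

Definition w0 : wseq := fun _ => 0.
Definition wadd (x y : wseq) : wseq := fun i => x i + y i.
Definition wopp (x : wseq) : wseq := fun i => - x i.
Definition wsub (x y : wseq) : wseq := fun i => x i - y i.
Definition wscale (c : R[i]) (x : wseq) : wseq := fun i => c * x i.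

Definition tends0 (u : nat -> R) : Prop :=
  forall e : R, 0 < e -> exists N : nat, forall n : nat, (N <= n)%N -> `|u n| < e.

Definition ctends (u : nat -> R[i]) (l : R[i]) : Prop :=
  tends0 (fun n => cabs (u n - l)).

(* phi = span{delta^j} = finitely supported sequences *)
Definition phi : set wseq :=
  [set x | exists N : nat, forall i : nat, (N <= i)%N -> x i = 0].

(* An FK-space: a vector subspace X of w with a total paranorm rho whose
   metric topology d(x,y) = rho(x-y) is complete and locally convex, and in
   which all coordinate functionals are continuous. *)
Definition is_FK (X : set wseq) (rho : wseq -> R) : Prop :=
  [/\
      [/\ X w0,
          (forall x y, X x -> X y -> X (wadd x y)) &
          (forall c x, X x -> X (wscale c x))],
      [/\ rho w0 = 0 /\ (forall x, X x -> 0 <= rho x),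
          (forall x, X x -> rho (wopp x) = rho x),
          (forall x y, X x -> X y -> rho (wadd x y) <= rho x + rho y),
          (forall (t : nat -> R[i]) (t0 : R[i]) (xs : nat -> wseq) (x0 : wseq),
              (forall n, X (xs n)) -> X x0 ->
              ctends t t0 -> tends0 (fun n => rho (wsub (xs n) x0)) ->
              tends0 (fun n => rho (wsub (wscale (t n) (xs n)) (wscale t0 x0))))
          & (forall x, X x -> rho x = 0 -> x = w0)],
      (forall xs : nat -> wseq, (forall n, X (xs n)) ->
          (forall e : R, 0 < e -> exists N : nat, forall m n : nat,
              (N <= m)%N -> (N <= n)%N -> rho (wsub (xs m) (xs n)) < e) ->
          exists2 x, X x & tends0 (fun n => rho (wsub (xs n) x))),
      (* local convexity: 0 has a base of convex neighbourhoods *)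
      (forall e : R, 0 < e -> exists U : set wseq,
          [/\ (forall x y (l : R), U x -> U y -> 0 <= l -> l <= 1 ->
                 U (wadd (wscale l%:C x) (wscale (1 - l)%:C y))),
              (forall x, U x -> X x /\ rho x < e) &
              exists2 d : R, 0 < d & (forall x, X x -> rho x < d -> U x)]) &
      (forall (j : nat) (x0 : wseq), X x0 -> forall e : R, 0 < e ->
          exists2 d : R, 0 < d & forall x, X x -> rho (wsub x x0) < d ->
              cabs (x j - x0 j) < e)].

Definition dual (X : set wseq) (rho : wseq -> R) : set (wseq -> R[i]) :=
  [set f | [/\ (forall x y, X x -> X y -> f (wadd x y) = f x + f y),
               (forall c x, X x -> f (wscale c x) = c * f x) &
               (forall x0, X x0 -> forall e : R, 0 < e ->
                  exists2 d : R, 0 < d & forall x, X x -> rho (wsub x x0) < d ->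
                     cabs (f x - f x0) < e)]].

(* x^(k) = sum_{j=1}^k x_j delta^j  (keeps the first k coordinates) *)
Definition sect (k : nat) (x : wseq) : wseq :=
  fun i => if (i < k)%N then x i else 0.

Definition Tn (p q : nat -> nat) (n : nat) (x : wseq) : wseq :=
  fun i => ((q n - p n)%:R)^-1 * \sum_(p n + 1 <= k < q n + 1) sect k x i.

Definition DS (p q : nat -> nat) (X : set wseq) (rho : wseq -> R) : set wseq :=
  [set x | X x /\ tends0 (fun n => rho (wsub (Tn p q n x) x))].

Definition DW (p q : nat -> nat) (X : set wseq) (rho : wseq -> R) : set wseq :=
  [set x | X x /\ forall f, dual X rho f -> ctends (fun n => f (Tn p q n x)) (f x)].

Definition DF (p q : nat -> nat) (X : set wseq) (rho : wseq -> R) : set wseq :=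
  [set x | X x /\ forall f, dual X rho f ->
             exists l : R[i], ctends (fun n => f (Tn p q n x)) l].

Definition DB (p q : nat -> nat) (X : set wseq) (rho : wseq -> R) : set wseq :=
  [set x | X x /\ forall f, dual X rho f ->
             exists M : R, forall n, cabs (f (Tn p q n x)) <= M].

Definition wsum (A B : set wseq) : set wseq :=
  [set z | exists x y, [/\ A x, B y & z = wadd x y]].

Definition sum_paranorm (X Y : set wseq) (rho s : wseq -> R) (z : wseq) : R :=
  inf [set r : R | exists x y, [/\ X x, Y y, z = wadd x y & r = rho x + s y]].

End FK.

From mathcomp Require Import all_boot all_algebra.
From mathcomp Require Import complex.
From mathcomp Require Import boolp classical_sets reals.
From mathcomp Require Import order.
Import Order.TTheory GRing.Theory Num.Theory.

Set Implicit Arguments.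
Unset Strict Implicit.
Unset Printing Implicit Defensive.

Local Open Scope ring_scope.
Local Open Scope classical_set_scope.

(* The operators T_n are additive and take values in phi, which lies in both
   X and Y.  Hence T_n(x+y) - (x+y) = (T_n x - x) + (T_n y - y) is split into
   an X-part and a Y-part, on which tau <= rho + s; and every f in Z' restricts
   to an element of X' and of Y', because tau <= rho on X and tau <= s on Y.
   Each of the four properties is thus inherited by sums. *)

Section ComplexSequences.
Variable R : realType.

Lemma cabs_ge0 (z : R[i]) : 0 <= cabs z.
Proof. exact: sqrtr_ge0. Qed.

Lemma cabsD (a b : R[i]) : cabs (a + b) <= cabs a + cabs b.
Proof.
have : `|a + b| <= `|a| + `|b| by exact: ler_normD.
by rewrite lecE /cabs !normc_def raddfD /= => /andP[_].
Qed.

Lemma tends0D (u v : nat -> R) :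
  tends0 u -> tends0 v -> tends0 (fun n => u n + v n).
Proof.
move=> hu hv e e_gt0.
have [N1 hN1] := hu _ (divr_gt0 e_gt0 (ltr0Sn _ 1)).
have [N2 hN2] := hv _ (divr_gt0 e_gt0 (ltr0Sn _ 1)).
exists (maxn N1 N2) => n; rewrite geq_max => /andP[n1 n2].
apply: le_lt_trans (ler_normD _ _) _.
by rewrite [e]splitr ltrD ?hN1 ?hN2.
Qed.

Lemma tends0_le (u v : nat -> R) :
  (forall n, 0 <= u n <= v n) -> tends0 v -> tends0 u.
Proof.
move=> uv hv e e_gt0; have [N hN] := hv e e_gt0; exists N => n /hN.
have /andP[u_ge0 u_le_v] := uv n.
by apply: le_lt_trans; rewrite !ger0_norm // (le_trans u_ge0).
Qed.

Lemma ctendsD (u v : nat -> R[i]) (a b : R[i]) :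
  ctends u a -> ctends v b -> ctends (fun n => u n + v n) (a + b).
Proof.
move=> hu hv; apply: tends0_le _ (tends0D hu hv) => n.
by rewrite cabs_ge0 opprD addrACA cabsD.
Qed.

End ComplexSequences.

Section Sections.
Variables (R : realType) (p q : nat -> nat).

Lemma sectD (k : nat) (x y : wseq R) (i : nat) :
  sect k (wadd x y) i = sect k x i + sect k y i.
Proof. by rewrite /sect /wadd; case: ifP; rewrite ?addr0. Qed.

Lemma TnD (n : nat) (x y : wseq R) :
  Tn p q n (wadd x y) = wadd (Tn p q n x) (Tn p q n y).
Proof.
apply: funext => i; rewrite /Tn /wadd -mulrDr -big_split /=.
by congr (_ * _); apply: eq_bigr => k _; rewrite sectD.
Qed.

Lemma Tn_phi (n : nat) (x : wseq R) : phi (Tn p q n x).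
Proof.
exists (q n) => i qn_le_i; rewrite /Tn big_nat_cond big1 ?mulr0 // => k.
case/andP=> /andP[_]; rewrite addn1 ltnS => k_le_qn _.
by rewrite /sect ifN // -leqNgt (leq_trans k_le_qn).
Qed.

End Sections.

Section SequenceAlgebra.
Variable R : realType.

Lemma wadd_w0 (x : wseq R) : wadd x (w0 R) = x.
Proof. by apply: funext => i; rewrite /wadd addr0. Qed.

Lemma w0_wadd (y : wseq R) : wadd (w0 R) y = y.
Proof. by apply: funext => i; rewrite /wadd add0r. Qed.

Lemma wsub_wadd (a b c d : wseq R) :
  wsub (wadd a b) (wadd c d) = wadd (wsub a c) (wsub b d).
Proof. by apply: funext => i; rewrite /wsub /wadd opprD addrACA. Qed.

End SequenceAlgebra.

Section FKSpace.
Variables (R : realType) (X : set (wseq R)) (rho : wseq R -> R).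
Hypothesis hX : is_FK X rho.

Lemma FK_w0 : X (w0 R).
Proof. by case: hX => [[]]. Qed.

Lemma FK_paranorm0 : rho (w0 R) = 0.
Proof. by case: hX => _ [[]]. Qed.

Lemma FK_paranorm_ge0 (x : wseq R) : X x -> 0 <= rho x.
Proof. by case: hX => _ [[_ rho_ge0] _ _ _ _] _ _ _; apply: rho_ge0. Qed.

Lemma FK_wsub (x y : wseq R) : X x -> X y -> X (wsub x y).
Proof.
case: hX => [[_ Xadd Xscale]] _ _ _ _ Xx Xy.
have -> : wsub x y = wadd x (wscale (-1) y).
  by apply: funext => i; rewrite /wsub /wadd /wscale mulN1r.
exact/Xadd/Xscale.
Qed.

End FKSpace.

Section SumSpace.
Variables (R : realType) (X Y : set (wseq R)) (rho s : wseq R -> R).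
Hypotheses (hX : is_FK X rho) (hY : is_FK Y s).

Local Notation Z := (wsum X Y).
Local Notation tau := (sum_paranorm X Y rho s).

Lemma wsum_wadd (x y : wseq R) : X x -> Y y -> Z (wadd x y).
Proof. by move=> Xx Yy; exists x, y. Qed.

Lemma sum_paranorm_le (x y : wseq R) :
  X x -> Y y -> tau (wadd x y) <= rho x + s y.
Proof.
move=> Xx Yy; apply: ge_inf; last by exists x, y.
exists 0 => _ [a [b [Xa Yb _ ->]]].
by rewrite addr_ge0 ?(FK_paranorm_ge0 hX) ?(FK_paranorm_ge0 hY).
Qed.

Lemma sum_paranorm_ge0 (z : wseq R) : Z z -> 0 <= tau z.
Proof.
move=> [x [y [Xx Yy ->]]].
apply: lb_le_inf; first by exists (rho x + s y), x, y.
move=> _ [a [b [Xa Yb _ ->]]].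
by rewrite addr_ge0 ?(FK_paranorm_ge0 hX) ?(FK_paranorm_ge0 hY).
Qed.

Lemma wsum_l (x : wseq R) : X x -> Z x.
Proof. by move=> Xx; rewrite -[x]wadd_w0; apply: wsum_wadd (FK_w0 hY). Qed.

Lemma wsum_r (y : wseq R) : Y y -> Z y.
Proof. by move=> Yy; rewrite -[y]w0_wadd; apply: wsum_wadd (FK_w0 hX) _. Qed.

Lemma sum_paranorm_le_l (x : wseq R) : X x -> tau x <= rho x.
Proof.
move=> Xx; have := sum_paranorm_le Xx (FK_w0 hY).
by rewrite wadd_w0 (FK_paranorm0 hY) addr0.
Qed.

Lemma sum_paranorm_le_r (y : wseq R) : Y y -> tau y <= s y.
Proof.
move=> Yy; have := sum_paranorm_le (FK_w0 hX) Yy.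
by rewrite w0_wadd (FK_paranorm0 hX) add0r.
Qed.

Lemma dual_wsum_l (f : wseq R -> R[i]) : dual Z tau f -> dual X rho f.
Proof.
case=> fD fZ fcont; split=> [x y Xx Yy | c x Xx | x0 Xx0 e e_gt0].
- by apply: fD; apply: wsum_l.
- by apply: fZ; apply: wsum_l.
have [d d_gt0 hd] := fcont x0 (wsum_l Xx0) e e_gt0.
exists d => // x Xx rho_lt_d; apply: hd; first exact: wsum_l.
exact: le_lt_trans (sum_paranorm_le_l (FK_wsub hX Xx Xx0)) rho_lt_d.
Qed.

Lemma dual_wsum_r (f : wseq R -> R[i]) : dual Z tau f -> dual Y s f.
Proof.
case=> fD fZ fcont; split=> [x y Xx Yy | c x Xx | x0 Xx0 e e_gt0].
- by apply: fD; apply: wsum_r.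
- by apply: fZ; apply: wsum_r.
have [d d_gt0 hd] := fcont x0 (wsum_r Xx0) e e_gt0.
exists d => // x Xx s_lt_d; apply: hd; first exact: wsum_r.
exact: le_lt_trans (sum_paranorm_le_r (FK_wsub hY Xx Xx0)) s_lt_d.
Qed.

Lemma dual_wsumD (f : wseq R -> R[i]) (x y : wseq R) :
  dual Z tau f -> X x -> Y y -> f (wadd x y) = f x + f y.
Proof. by case=> fD _ _ Xx Yy; apply: fD; [apply: wsum_l | apply: wsum_r]. Qed.

Variables (p q : nat -> nat).
Hypotheses (phiX : @phi R `<=` X) (phiY : @phi R `<=` Y).

Lemma dual_TnD (f : wseq R -> R[i]) (x y : wseq R) (n : nat) :
  dual Z tau f -> f (Tn p q n (wadd x y)) = f (Tn p q n x) + f (Tn p q n y).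
Proof.
by move=> Zf; rewrite TnD (dual_wsumD Zf) //; [apply: phiX | apply: phiY];
  apply: Tn_phi.
Qed.

Lemma DS_wsum : wsum (DS p q X rho) (DS p q Y s) `<=` DS p q Z tau.
Proof.
move=> _ [x [y [[Xx Tx] [Yy Ty] ->]]]; split; first exact: wsum_wadd.
apply: tends0_le _ (tends0D Tx Ty) => n.
have XTx : X (wsub (Tn p q n x) x) by apply: (FK_wsub hX) => //; apply/phiX/Tn_phi.
have YTy : Y (wsub (Tn p q n y) y) by apply: (FK_wsub hY) => //; apply/phiY/Tn_phi.
rewrite TnD wsub_wadd sum_paranorm_le // andbT.
exact/sum_paranorm_ge0/wsum_wadd.
Qed.

Lemma DW_wsum : wsum (DW p q X rho) (DW p q Y s) `<=` DW p q Z tau.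
Proof.
move=> _ [x [y [[Xx Tx] [Yy Ty] ->]]]; split=> [|f Zf]; first exact: wsum_wadd.
rewrite dual_wsumD //; under eq_fun do rewrite dual_TnD //.
by apply: ctendsD; [apply: Tx; apply: dual_wsum_l | apply: Ty; apply: dual_wsum_r].
Qed.

Lemma DF_wsum : wsum (DF p q X rho) (DF p q Y s) `<=` DF p q Z tau.
Proof.
move=> _ [x [y [[Xx Tx] [Yy Ty] ->]]]; split=> [|f Zf]; first exact: wsum_wadd.
have [lx hlx] := Tx f (dual_wsum_l Zf).
have [ly hly] := Ty f (dual_wsum_r Zf).
by exists (lx + ly); under eq_fun do rewrite dual_TnD //; apply: ctendsD.
Qed.

Lemma DB_wsum : wsum (DB p q X rho) (DB p q Y s) `<=` DB p q Z tau.
Proof.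
move=> _ [x [y [[Xx Tx] [Yy Ty] ->]]]; split=> [|f Zf]; first exact: wsum_wadd.
have [Mx hMx] := Tx f (dual_wsum_l Zf).
have [My hMy] := Ty f (dual_wsum_r Zf).
exists (Mx + My) => n; rewrite dual_TnD //.
exact: le_trans (cabsD _ _) (lerD (hMx n) (hMy n)).
Qed.

End SumSpace.

Theorem mainTheorem17 (R : realType) (p q : nat -> nat)
    (hpq : forall n, (p n < q n)%N)
    (hq : forall M : nat, exists N : nat, forall n, (N <= n)%N -> (M <= q n)%N)
    (X Y : set (wseq R)) (rho s : wseq R -> R)
    (hX : is_FK X rho) (hY : is_FK Y s)
    (hphiX : @phi R `<=` X) (hphiY : @phi R `<=` Y) :
  let Z := wsum X Y in
  let tau := sum_paranorm X Y rho s in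
  [/\ wsum (DS p q X rho) (DS p q Y s) `<=` DS p q Z tau,
      wsum (DW p q X rho) (DW p q Y s) `<=` DW p q Z tau,
      wsum (DF p q X rho) (DF p q Y s) `<=` DF p q Z tau &
      wsum (DB p q X rho) (DB p q Y s) `<=` DB p q Z tau].
Proof.
split.
- exact: DS_wsum.
- exact: DW_wsum.
- exact: DF_wsum.
- exact: DB_wsum.
Qed.
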